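(* Let $p$ be a prime and work in $F\otimes_{ku_*}ku_*(\mathbb{Z}_{p^2})$ with the notation of the context. Then for all integers $a,b$ and every integer $k\ge2$, $$ \begin{aligned} p^{k+1}[a,b] ={}& (-1)^k u_1^k\, p\, v^{kg_1}[a,b-kg_1] + (-1)^k u_1^{k-1} v^{(k-1)g_1+g_2}[a,b-(k-1)g_1-g_2]\\ &+\sum_{t=1}^{\lfloor k/2\rfloor}\Big( c_{k+1}(t)(-1)^{k+t}u_1^{k-2t}\,p\, v^{(k-2t)g_1+tg_2}[a,b-(k-2t)g_1-tg_2]\\ &\qquad\qquad + d_{k+1}(t)(-1)^{k+t}u_1^{k-2t-1} v^{(k-2t-1)g_1}v^{(t+1)g_2}[a,b-(k-2t-1)g_1-(t+1)g_2]\Big)\\ &+\Sigma_1+\Sigma_2+\Sigma_3, \end{aligned} $$ where $$\Sigma_1=\sum_{t=0}^{k-1}c_t\,p^{k-t-1}v^{tg_1}(A+B)^{[a,b-tg_1]},\qquad \Sigma_2=\sum_{t=1}^{\lfloor (k-1)/2\rfloor}c'_t\,p^{k-2t-1}v^{tg_2}(A+B)^{[a,b-tg_2]},$$ $$\Sigma_3=\sum_{r=1}^{\lfloor (k-2)/2\rfloor}\ \sum_{t=1}^{k-1-2r}c_{r,t}\,p^{k-2r-t-1}v^{rg_2+tg_1}(A+B)^{[a,b-rg_2-tg_1]}.$$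
   Context: Fix a prime $p$. Let $ku_*=\mathbb{Z}_{(p)}[v]$ ($p$-local connective $K$-theory coefficients, $v$ in degree 2). Put $g_1=p-1$, $g_2=p^2-1$. For $m\ge1$, $0\le t\le p^m-1$, let $a_{t,m}=\binom{p^m}{t+1}v^t$. The reduced $ku_*(\mathbb{Z}_{p^2})$ is the $ku_*$-module generated by $e_j$ ($j\ge1$) with relations $\sum_{t=0}^{p^2-1}a_{t,2}e_{j-t}=0$ for all $j\ge1$, $e_h=0$ for $h\le0$. Let $F$ be the free $ku_*$-module on $\alpha_i$, $i\ge1$ ($\alpha_h=0$ for $h\le0$), and $[i,j]=\alpha_i\otimes e_j\in F\otimes_{ku_*}ku_*(\mathbb{Z}_{p^2})$ (zero if $i\le0$ or $j\le0$). Define the unit $u_1\in\mathbb{Z}_{(p)}^\times$ by $\binom{p^2}{p}=u_1p$, so $a_{g_1,2}=u_1pv^{g_1}$. Convention: $v^s=0$ for $s<0$ (so e.g. $v^{(k-2t-1)g_1}v^{(t+1)g_2}=0$ if $k-2t-1<0$). For integers $a,b$ set $A^{[a,b]}=\sum_{i=1}^{p-2}\binom{p^2}{i+1}v^i[a,b-i]$, $B^{[a,b]}=\sum_{i=p}^{p^2-2}\binom{p^2}{i+1}v^i[a,b-i]$, $(A+B)^{[a,b]}=A^{[a,b]}+B^{[a,b]}$. Integers $c_k(t),d_k(t)$: $c_k(0)=d_k(0)=1$ for $k\ge2$; $c_2(t)=d_2(t)=0$ for $t\ge1$; for $k\ge3$, $t\ge1$: $c_k(t)=d_{k-1}(t-1)+c_{k-1}(t)$,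 $d_k(t)=c_{k-1}(t)$; and $c_k(t)=d_k(t)=0$ if $t<0$ or $k<2$. Finally $c_t=(-1)^{t+1}u_1^t$, $c'_t=(-1)^{t+1}c_{2t+1}(t)$, $c_{r,t}=(-1)^{t+r+1}u_1^t c_{t+2r+1}(r)$. $\lfloor\cdot\rfloor$ is the integer part. *)

From mathcomp Require Import all_boot all_order all_algebra.
Set Implicit Arguments. Unset Strict Implicit. Unset Printing Implicit Defensive.
Import Order.TTheory GRing.Theory Num.Theory.
Local Open Scope ring_scope.

(* Ground ring: ku_* = Z_(p)[v] is realised inside {poly rat} (v = 'X).
   q : rat lies in Z_(p) iff p does not divide its denominator. *)
Definition in_Zp (p : nat) (q : rat) : bool := ~~ (p%:Z %| denq q)%Z.
Definition in_kuZp (p : nat) (P : {poly rat}) : Prop :=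
  forall i : nat, in_Zp p (P`_i).

(* Elements of the free module on the symbols [i,j] (i,j integers; [i,j] = 0
   when i <= 0 or j <= 0), given by their coefficient at each (i,j). *)
Definition elt := int -> int -> {poly rat}.

Definition gen (a b : int) : elt :=
  fun i j => if [&& (0 < a)%R, (0 < b)%R, i == a & j == b] then 1 else 0.

Definition scl (c : {poly rat}) (x : elt) : elt := fun i j => c * x i j.
Definition eadd (x y : elt) : elt := fun i j => x i j + y i j.
Definition esum (I : Type) (r : seq I) (F : I -> elt) : elt :=
  fun i j => \sum_(t <- r) F t i j.

Definition vpow (s : int) : {poly rat} := if (s < 0)%R then 0 else 'X^(`|s|%N).

Definition g1 (p : nat) : int := (p%:Z - 1)%R.
Definition g2 (p : nat) : int := ((p%:Z) ^+ 2 - 1)%R.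

Definition acoef (p t : nat) : {poly rat} := ('C(p ^ 2, t.+1))%:R *: 'X^t.

(* the defining relation of ku_*(Z_{p^2}) tensored with alpha_i:
   sum_{t=0}^{p^2-1} a_{t,2} [i, j - t] *)
Definition relation (p : nat) (i j : int) : elt :=
  esum (iota 0 (p ^ 2)) (fun t => scl (acoef p t) (gen i (j - t%:Z))).

Definition Aelt (p : nat) (a b : int) : elt :=
  esum (iota 1 (p - 2)) (fun i => scl (acoef p i) (gen a (b - i%:Z))).
Definition Belt (p : nat) (a b : int) : elt :=
  esum (iota p (p ^ 2 - 1 - p)) (fun i => scl (acoef p i) (gen a (b - i%:Z))).
Definition ABelt (p : nat) (a b : int) : elt := eadd (Aelt p a b) (Belt p a b).

Definition u1 (p : nat) : rat := ('C(p ^ 2, p))%:R / p%:R.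

(* c_k(t), d_k(t) for t >= 0 (they vanish for t < 0, which never occurs below) *)
Fixpoint cd (k : nat) : nat -> int * int :=
  match k with
  | 0 => fun _ => (0, 0)
  | k'.+1 => fun t =>
      if k' is 0 then (0, 0)
      else if t is 0 then (1, 1)
      else if k' == 1%N then (0, 0)
      else ((cd k' t.-1).2 + (cd k' t).1, (cd k' t).1)
  end.
Definition ck (k t : nat) : int := (cd k t).1.
Definition dk (k t : nat) : int := (cd k t).2.

Definition c_ (p t : nat) : rat := (-1) ^+ t.+1 * u1 p ^+ t.
Definition c'_ (t : nat) : rat := (-1) ^+ t.+1 * (ck (2 * t).+1 t)%:~R.
Definition c_rt (p r t : nat) : rat :=
  (-1) ^+ (t + r).+1 * u1 p ^+ t * (ck (t + 2 * r).+1 r)%:~R.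

From mathcomp Require Import all_boot all_order all_algebra.
From mathcomp Require Import zify ring.
Set Implicit Arguments. Unset Strict Implicit. Unset Printing Implicit Defensive.
Import Order.TTheory GRing.Theory Num.Theory.
Local Open Scope ring_scope.

(* Put W = A + B and F = p^2 + u_1 p v^g_1 + v^g_2, so that the relation through
   [a,b] reads (F + W)[a,b] = 0.  Dividing p^(k+1) by F in Z_(p)[u_1, v] gives
   p^(k+1) + rho_k F = p alpha_k + beta_k, where the remainder coefficients obey
   alpha_(k+1) = beta_k - u_1 v^g_1 alpha_k and beta_(k+1) = - v^g_2 alpha_k; the
   numbers c_k(t), d_k(t) solve this recursion in closed form, and the remainder
   p alpha_k + beta_k is the explicit part of the formula.  Writing
   rho_k F = rho_k (F + W) - rho_k W, the term rho_k W yields Sigma_1 + Sigma_2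
   + Sigma_3 and rho_k (F + W) is a Z_(p)[v]-combination of relations.  Encoding
   Q(v)[a,c] by its coefficients turns all of this into a polynomial identity. *)

Lemma ck_0 k : (2 <= k)%N -> ck k 0 = 1.
Proof. by case: k => [|[|k]]. Qed.

Lemma dk_0 k : (2 <= k)%N -> dk k 0 = 1.
Proof. by case: k => [|[|k]]. Qed.

Lemma ck_S k t : (2 <= k)%N -> ck k.+1 t.+1 = dk k t + ck k t.+1.
Proof. by case: k => [|[|[|k]]]. Qed.

Lemma dk_S k t : (2 <= k)%N -> dk k.+1 t = ck k t.
Proof. by case: k t => [|[|[|k]]] []. Qed.

Lemma ckdk_eq0 k t :
  ((k <= 2 * t)%N -> ck k t = 0) /\ ((k <= (2 * t).+1)%N -> dk k t = 0).
Proof.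
elim: k t => [|k IH] t; first by [].
case: (ltnP k 2) => [|k2]; first by case: k {IH} => [|[|]] //; case: t.
case: t => [|t]; first by split=> h; lia.
have [_ hd] := IH t; have [hc _] := IH t.+1.
by rewrite ck_S // dk_S //; split=> h; [rewrite hd ?hc | rewrite hc]; lia.
Qed.

Lemma ck_eq0 k t : (k <= 2 * t)%N -> ck k t = 0.
Proof. by case: (ckdk_eq0 k t). Qed.

Lemma dk_eq0 k t : (k <= (2 * t).+1)%N -> dk k t = 0.
Proof. by case: (ckdk_eq0 k t). Qed.

Lemma big_iota_trunc (R : nmodType) (F : nat -> R) a m n : (m <= n)%N ->
  (forall t, (a + m <= t < a + n)%N -> F t = 0) ->
  \sum_(t <- iota a n) F t = \sum_(t <- iota a m) F t.
Proof.
move=> le_mn F0; rewrite -(subnKC le_mn) iotaD big_cat /=.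
rewrite [X in _ + X]big1_seq ?addr0 // => t /andP[_]; rewrite mem_iota => ht.
by apply: F0; lia.
Qed.

Lemma eq_big_iota (R : nmodType) (F G : nat -> R) a n :
  (forall t, (a <= t < a + n)%N -> F t = G t) ->
  \sum_(t <- iota a n) F t = \sum_(t <- iota a n) G t.
Proof. by move=> eqFG; apply: eq_big_seq => t; rewrite mem_iota => /eqFG. Qed.

Lemma big_iota_recl (R : nmodType) (F : nat -> R) a n :
  \sum_(t <- iota a n.+1) F t = F a + \sum_(t <- iota a n) F t.+1.
Proof. by rewrite (_ : iota a n.+1 = a :: iota (1 + a) n) // big_cons iotaDl big_map. Qed.

Lemma big_iota_recr (R : nmodType) (F : nat -> R) a n :
  \sum_(t <- iota a n.+1) F t = \sum_(t <- iota a n) F t + F (a + n)%N.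
Proof. by rewrite -addn1 iotaD big_cat /= big_seq1. Qed.

Section Reduction.
(* P, U, X, Y stand for p, u_1, v^g_1, v^g_2. *)
Variables (R : comPzRingType) (P U X Y : R).

Definition rel_head : R := P ^+ 2 + U * P * X + Y.

Definition alpha_term (i t : nat) : R :=
  (-1) ^+ (i + t) * (ck i.+1 t)%:~R * U ^+ (i - 2 * t) * X ^+ (i - 2 * t) * Y ^+ t.
Definition beta_term (i t : nat) : R :=
  (-1) ^+ (i + t) * (dk i.+1 t)%:~R * U ^+ (i - 2 * t - 1) * X ^+ (i - 2 * t - 1)
  * Y ^+ t.+1.
Definition alpha (i : nat) : R := \sum_(t <- iota 0 i.+1) alpha_term i t.
Definition beta (i : nat) : R := \sum_(t <- iota 0 i.+1) beta_term i t.

Lemma alpha_rec i : (1 <= i)%N -> alpha i.+1 = beta i - U * X * alpha i.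
Proof.
move=> i_gt0.
pose tail s := (-1) ^+ (i + s) * (ck i.+1 s.+1)%:~R * U ^+ (i - 2 * s - 1)
  * X ^+ (i - 2 * s - 1) * Y ^+ s.+1.
have split_term s : alpha_term i.+1 s.+1 = beta_term i s + tail s.
  rewrite /tail /alpha_term /beta_term ck_S; last lia.
  rewrite (_ : (i.+1 - 2 * s.+1 = i - 2 * s - 1)%N); last lia.
  rewrite addSn addnS !exprS /= intrD; ring.
have tail_trunc : \sum_(s <- iota 0 i.+1) tail s = \sum_(s <- iota 0 i) tail s.
  apply: big_iota_trunc => // s hs; rewrite /tail ck_eq0 ?mulr0 ?mul0r //; lia.
have tail_shift :
    \sum_(s <- iota 0 i) tail s = - (U * X * \sum_(s <- iota 0 i) alpha_term i s.+1).
  rewrite mulr_sumr -sumrN; apply: eq_big_iota => s hs; rewrite /tail /alpha_term.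
  case: (leqP (2 * s.+1) i) => hi.
    rewrite (_ : (i - 2 * s - 1 = (i - 2 * s.+1).+1)%N); last lia.
    rewrite !exprS addnS exprS; ring.
  by rewrite ck_eq0; [rewrite !mulr0 !mul0r ?mulr0 ?oppr0 | lia].
have head_term : alpha_term i.+1 0 = - (U * X * alpha_term i 0).
  rewrite /alpha_term !addn0 !subn0 !ck_0; try lia.
  by rewrite !exprS; ring.
rewrite [alpha i.+1]/alpha big_iota_recl (eq_bigr _ (fun s _ => split_term s)) big_split /=.
rewrite tail_trunc tail_shift head_term [in RHS]/alpha [in RHS]big_iota_recl.
by rewrite /beta; ring.
Qed.

Lemma beta_rec i : (1 <= i)%N -> beta i.+1 = - Y * alpha i.
Proof.
move=> i_gt0.
have beta_last : beta_term i.+1 i.+1 = 0.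
  rewrite /beta_term dk_S; last lia.
  by rewrite ck_eq0 ?mulr0z ?mulr0 ?mul0r //; lia.
rewrite /beta /alpha big_iota_recr add0n beta_last addr0 mulr_sumr.
apply: eq_big_iota => t ht; rewrite /alpha_term /beta_term dk_S; last lia.
rewrite (_ : (i.+1 - 2 * t - 1 = i - 2 * t)%N); last lia.
by rewrite addSn !exprS; ring.
Qed.

Definition sigma1_term (k t : nat) : R :=
  (-1) ^+ t.+1 * U ^+ t * P ^+ (k - t - 1) * X ^+ t.
Definition sigma2_term (k t : nat) : R :=
  (-1) ^+ t.+1 * (ck (2 * t).+1 t)%:~R * P ^+ (k - 2 * t - 1) * Y ^+ t.
Definition sigma3_term (k r t : nat) : R :=
  (-1) ^+ (t + r).+1 * U ^+ t * (ck (t + 2 * r).+1 r)%:~R * P ^+ (k - 2 * r - t - 1)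
  * (Y ^+ r * X ^+ t).

Definition sigma1 (k : nat) : R := \sum_(t <- iota 0 k) sigma1_term k t.
Definition sigma2 (k : nat) : R := \sum_(t <- iota 1 (k.-1)./2) sigma2_term k t.
Definition sigma3 (k : nat) : R :=
  \sum_(r <- iota 1 (k - 2)./2) \sum_(t <- iota 1 (k - 1 - 2 * r)) sigma3_term k r t.

Definition rho_tail (k : nat) : R :=
  \sum_(r <- iota 1 k) \sum_(t <- iota 0 (k - 2 * r)) sigma3_term k r t.
Definition rho (k : nat) : R := sigma1 k + rho_tail k.

Lemma sigma2_add_sigma3 k : sigma2 k + sigma3 k = rho_tail k.
Proof.
pose first_term r := if (2 * r < k)%N then sigma3_term k r 0 else 0.
have -> : rho_tail k = \sum_(r <- iota 1 k)
    (first_term r + \sum_(t <- iota 1 (k - 1 - 2 * r)) sigma3_term k r t).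
  apply: eq_big_iota => r hr; rewrite /first_term; case: ifP => hk.
    rewrite (_ : (k - 2 * r = (k - 1 - 2 * r).+1)%N); last lia.
    by rewrite (_ : iota 0 _.+1 = 0%N :: iota 1 (k - 1 - 2 * r)) // big_cons.
  rewrite (_ : (k - 2 * r = 0)%N); last lia.
  by rewrite (_ : (k - 1 - 2 * r = 0)%N) ?big_nil ?addr0 //; lia.
rewrite big_split /= (big_iota_trunc (m := (k.-1)./2)); last 2 first.
- lia.
- by move=> t ht; rewrite /first_term ifF //; lia.
rewrite [X in _ = _ + X](big_iota_trunc (m := (k - 2)./2)); last 2 first.
- lia.
- by move=> t ht; rewrite (_ : (k - 1 - 2 * t = 0)%N) ?big_nil //; lia.
congr (_ + _); apply: eq_big_iota => r hr; rewrite /first_term ifT; last lia.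
by rewrite /sigma3_term /sigma2_term !add0n subn0 !expr0 !mulr1; ring.
Qed.

Lemma rho_rec k : (1 <= k)%N -> rho k.+1 = P * rho k - alpha k.
Proof.
move=> k_gt0.
have sigma1S : sigma1 k.+1 = P * sigma1 k + (-1) ^+ k.+1 * U ^+ k * X ^+ k.
  rewrite /sigma1 big_iota_recr add0n mulr_sumr /sigma1_term subSnn subnn expr0 mulr1.
  congr (_ + _); apply: eq_big_iota => t ht.
  rewrite (_ : (k.+1 - t - 1 = (k - t - 1).+1)%N); last lia.
  by rewrite !exprS; ring.
have inner r : (1 <= r)%N ->
    \sum_(t <- iota 0 (k.+1 - 2 * r)) sigma3_term k.+1 r t =
    P * \sum_(t <- iota 0 (k - 2 * r)) sigma3_term k r t - alpha_term k r.
  move=> r_gt0; case: (leqP (2 * r) k) => hr; last first.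
    rewrite (_ : (k.+1 - 2 * r = 0)%N); last lia.
    rewrite (_ : (k - 2 * r = 0)%N); last lia.
    rewrite /alpha_term ck_eq0; last lia.
    by rewrite !big_nil mulr0z; ring.
  rewrite (_ : (k.+1 - 2 * r = (k - 2 * r).+1)%N); last lia.
  rewrite big_iota_recr add0n mulr_sumr; congr (_ + _).
    apply: eq_big_iota => t ht; rewrite /sigma3_term.
    rewrite (_ : (k.+1 - 2 * r - t - 1 = (k - 2 * r - t - 1).+1)%N); last lia.
    by rewrite !exprS; ring.
  rewrite /sigma3_term /alpha_term (_ : (k - 2 * r + 2 * r = k)%N); last lia.
  rewrite (_ : (k.+1 - 2 * r - (k - 2 * r) - 1 = 0)%N); last lia.
  have -> : (-1) ^+ (k - 2 * r + r).+1 = - (-1) ^+ (k + r) :> R.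
    rewrite (_ : (k + r = (k - 2 * r + r) + 2 * r)%N); last lia.
    by rewrite exprS [in RHS]exprD exprM sqrrN !expr1n mulr1 mulN1r.
  ring.
have rho_tailS : rho_tail k.+1 = P * rho_tail k - \sum_(r <- iota 1 k) alpha_term k r.
  rewrite /rho_tail big_iota_recr add1n [X in _ + X]big1_seq; last first.
    by move=> t; rewrite (_ : (k.+1 - 2 * k.+1 = 0)%N) //; lia.
  rewrite addr0 mulr_sumr -sumrB; apply: eq_big_iota => r hr; apply: inner; lia.
have alpha_head : alpha_term k 0 = (-1) ^+ k * U ^+ k * X ^+ k.
  rewrite /alpha_term addn0 subn0 ck_0; last lia.
  by rewrite expr0 !mulr1.
rewrite /rho sigma1S rho_tailS /alpha (_ : iota 0 k.+1 = 0%N :: iota 1 k) //.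
by rewrite big_cons alpha_head exprS; ring.
Qed.

Lemma expr_rel_head_reduction k :
  (1 <= k)%N -> P ^+ k.+1 + rho k * rel_head = P * alpha k + beta k.
Proof.
elim: k => [//|k IH] _; case: (ltnP k 1) => k_gt0.
  have -> : k = 0%N by lia.
  rewrite /rho /sigma1 /sigma1_term /rho_tail /alpha /beta /alpha_term /beta_term.
  by rewrite /rel_head /ck /dk /= !big_cons !big_nil /=; ring.
rewrite rho_rec // alpha_rec // beta_rec // exprS.
rewrite (_ : P * P ^+ k.+1 = P * (P ^+ k.+1 + rho k * rel_head) - P * rho k * rel_head);
  last by ring.
by rewrite IH // /rel_head; ring.
Qed.

Definition remainder_term (k t : nat) : R :=
  (ck k.+1 t)%:~R * (-1) ^+ (k + t) * U ^+ (k - 2 * t) * P * (X ^+ (k - 2 * t) * Y ^+ t)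
  + (dk k.+1 t)%:~R * (-1) ^+ (k + t) * U ^+ (k - 2 * t - 1)
    * (X ^+ (k - 2 * t - 1) * Y ^+ t.+1).
Definition remainder (k : nat) : R :=
  (-1) ^+ k * U ^+ k * P * X ^+ k + ((-1) ^+ k * U ^+ k.-1 * (X ^+ k.-1 * Y)
  + \sum_(t <- iota 1 k./2) remainder_term k t).

Lemma remainder_alpha_beta k : (2 <= k)%N -> remainder k = P * alpha k + beta k.
Proof.
move=> k_ge2; rewrite /alpha /beta mulr_sumr -big_split /= big_cons.
rewrite (big_iota_trunc (m := k./2)); last 2 first.
- lia.
- move=> t ht; rewrite /alpha_term /beta_term ck_eq0 ?dk_eq0; try lia.
  by rewrite !mulr0 !mul0r mulr0 add0r.
rewrite /remainder addrA; congr (_ + _).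
  rewrite /alpha_term /beta_term addn0 !subn0 ck_0 ?dk_0; try lia.
  by rewrite subn1 !mulr1 expr1; ring.
by apply: eq_big_iota => t ht; rewrite /remainder_term /alpha_term /beta_term; ring.
Qed.

Lemma expr_decomposition (W : R) k : (2 <= k)%N ->
  P ^+ k.+1 = remainder k + rho k * W - rho k * (rel_head + W).
Proof.
move=> k_ge2; have := expr_rel_head_reduction (ltnW k_ge2).
rewrite remainder_alpha_beta // => <-; ring.
Qed.

End Reduction.

Lemma vpow_nat (n : nat) : vpow n%:Z = 'X^n.
Proof. by []. Qed.

Lemma vpow_neg (n : int) : n < 0 -> vpow n = 0.
Proof. by rewrite /vpow => ->. Qed.

Lemma vpowD (m n : int) : 0 <= m -> 0 <= n -> vpow (m + n) = vpow m * vpow n.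
Proof. by case: m => // m _; case: n => // n _; rewrite -PoszD !vpow_nat exprD. Qed.

Lemma vpowMn (k : nat) (n : int) : 0 <= n -> vpow (k%:Z * n) = vpow n ^+ k.
Proof. by case: n => // n _; rewrite -PoszM !vpow_nat -exprM mulnC. Qed.

(* [pgen a c Q] is the element Q(v)[a,c] = sum_n Q_n v^n [a, c - n]. *)
Definition pgen (a c : int) (Q : {poly rat}) : elt := fun i j =>
  if [&& 0 < a, i == a & 0 < j] then Q`_`|c - j| *: vpow (c - j) else 0.

Lemma pgen0 a c i j : pgen a c 0 i j = 0.
Proof. by rewrite /pgen coef0 scale0r if_same. Qed.

Lemma pgenD a c Q1 Q2 i j : pgen a c (Q1 + Q2) i j = pgen a c Q1 i j + pgen a c Q2 i j.
Proof. by rewrite /pgen; case: ifP; rewrite ?addr0 // coefD scalerDl. Qed.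

Lemma pgen_sum (I : Type) (r : seq I) (F : I -> {poly rat}) a c i j :
  pgen a c (\sum_(x <- r) F x) i j = \sum_(x <- r) pgen a c (F x) i j.
Proof.
elim: r => [|x r IH]; first by rewrite !big_nil pgen0.
by rewrite !big_cons pgenD IH.
Qed.

Lemma gen_pgen a c i j : gen a c i j = pgen a c 1 i j.
Proof.
rewrite /gen /pgen coef1; case: (eqVneq j c) => [-> | ne_jc].
  rewrite subrr /= scale1r (vpow_nat 0) expr0 andbT.
  by case: (0 < a); case: (0 < c); case: (i == a).
have -> : (`|c - j|%N == 0%N) = false by rewrite absz_eq0 subr_eq0 eq_sym (negPf ne_jc).
by rewrite !andbF scale0r if_same.
Qed.

Lemma scale_vpow_pgen (r : rat) (n : int) a c Q i j :
  r *: vpow n * pgen a c Q i j = pgen a (c + n) (r *: vpow n * Q) i j.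
Proof.
case: n => [n | n]; last by rewrite vpow_neg // scaler0 !mul0r pgen0.
rewrite /pgen vpow_nat; case: ifP => _; last by rewrite mulr0.
rewrite -[r *: 'X^n * Q]scalerAl coefZ coefXnM.
rewrite (_ : c + n - j = (c - j) + n); last by rewrite addrAC.
case: (c - j) => [d | d].
  rewrite -PoszD /= ifF; last lia.
  by rewrite addnK !vpow_nat -scalerAr -scalerAl scalerA mulrC -exprD addnC.
rewrite vpow_neg // scaler0 mulr0; case: (ltrP (Negz d + n) 0) => [/vpow_neg -> | h].
  by rewrite scaler0.
by rewrite ifT ?mulr0 ?scale0r //; move: h; rewrite NegzE; lia.
Qed.

Lemma scl_gen_pgen (r : rat) (n : int) a b c i j : c + n = b ->
  scl (r *: vpow n) (gen a c) i j = pgen a b (r *: vpow n) i j.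
Proof. by move=> <-; rewrite /scl gen_pgen scale_vpow_pgen mulr1. Qed.

Lemma scl_gen_pgen2 (r : rat) (m n : int) a b c i j : c + m + n = b ->
  scl (r *: (vpow m * vpow n)) (gen a c) i j = pgen a b (r *: (vpow m * vpow n)) i j.
Proof.
move=> def_b; case: (ltrP m 0) => [m_lt0 | m_ge0].
  by rewrite vpow_neg // mul0r scaler0 /scl mul0r pgen0.
case: (ltrP n 0) => [n_lt0 | n_ge0].
  by rewrite [vpow n]vpow_neg // mulr0 scaler0 /scl mul0r pgen0.
by rewrite -vpowD //; apply: scl_gen_pgen; rewrite addrA.
Qed.

Lemma scl_polyC_gen_pgen (x : rat) a b i j :
  scl x%:P (gen a b) i j = pgen a b x%:P i j.
Proof.
have vpow0 : x%:P = x *: vpow 0 by rewrite (vpow_nat 0) expr0 alg_polyC.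
by rewrite vpow0; apply: scl_gen_pgen; rewrite addr0.
Qed.

Definition ABpoly (p : nat) : {poly rat} :=
  \sum_(t <- iota 1 (p - 2)) acoef p t + \sum_(t <- iota p (p ^ 2 - 1 - p)) acoef p t.
Definition rel_poly (p : nat) : {poly rat} := \sum_(t <- iota 0 (p ^ 2)) acoef p t.

Lemma esum_acoef_pgen p a c (r : seq nat) i j :
  esum r (fun t => scl (acoef p t) (gen a (c - t%:Z))) i j =
  pgen a c (\sum_(t <- r) acoef p t) i j.
Proof.
rewrite /esum pgen_sum; apply: eq_bigr => t _; rewrite /acoef -vpow_nat.
by apply: scl_gen_pgen; rewrite subrK.
Qed.

Lemma ABelt_pgen p a c i j : ABelt p a c i j = pgen a c (ABpoly p) i j.
Proof. by rewrite /ABelt /eadd /Aelt /Belt !esum_acoef_pgen pgenD. Qed.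

Lemma relation_pgen p a c i j : relation p a c i j = pgen a c (rel_poly p) i j.
Proof. exact: esum_acoef_pgen. Qed.

Lemma rel_poly_split p : (2 <= p)%N ->
  rel_poly p = rel_head (p%:R : rat)%:P (u1 p)%:P (vpow (g1 p)) (vpow (g2 p)) + ABpoly p.
Proof.
move=> p_ge2; have p2_gt : (p + 1 <= p ^ 2)%N by rewrite expnS expn1; nia.
rewrite /rel_poly /ABpoly.
rewrite [in iota 0 _](_ : (p ^ 2 = (p - 2).+1 + (1 + ((p ^ 2 - 1 - p) + 1)))%N); last lia.
rewrite iotaD big_cat (_ : iota 0 (p - 2).+1 = 0%N :: iota 1 (p - 2)) // big_cons add0n.
rewrite iotaD big_cat iotaD big_cat /= !big_cons !big_nil !addr0.
rewrite (_ : ((p - 2).+1 + 1 = p)%N); last lia.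
rewrite (_ : (p + (p ^ 2 - 1 - p) = p ^ 2 - 1)%N); last lia.
rewrite (_ : ((p - 2).+1 = p - 1)%N); last lia.
rewrite (_ : g1 p = (p - 1)%N%:Z); last by rewrite /g1; lia.
rewrite (_ : g2 p = (p ^ 2 - 1)%N%:Z); last by rewrite /g2; lia.
rewrite !vpow_nat /acoef bin1 expr0 (_ : ((p - 1).+1 = p)%N); last lia.
rewrite (_ : ((p ^ 2 - 1).+1 = p ^ 2)%N); last lia.
rewrite binn scale1r.
have binom_u1 : ('C(p ^ 2, p)%:R : rat) = u1 p * p%:R.
  by rewrite /u1 mulfVK // pnatr_eq0; lia.
rewrite binom_u1 -!mul_polyC mulr1 natrX rmorphXn rmorphM /= /rel_head.
ring.
Qed.

Definition poly_of_monomials (s : seq (rat * int)) : {poly rat} :=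
  \sum_(m <- s) m.1 *: vpow m.2.

Lemma sum_scl_ABelt_pgen p a b (s : seq (rat * int)) i j :
  \sum_(m <- s) scl (m.1 *: vpow m.2) (ABelt p a (b - m.2)) i j =
  pgen a b (poly_of_monomials s * ABpoly p) i j.
Proof.
rewrite /poly_of_monomials big_distrl pgen_sum; apply: eq_bigr => m _.
by rewrite /scl ABelt_pgen scale_vpow_pgen subrK.
Qed.

Definition rel_witness (a b : int) (s : seq (rat * int)) :
    seq ({poly rat} * (int * int)) :=
  [seq ((- m.1) *: vpow m.2, (a, b - m.2)) | m <- s].

Lemma rel_witness_pgen p a b s i j :
  \sum_(x <- rel_witness a b s) x.1 * relation p x.2.1 x.2.2 i j =
  pgen a b (- poly_of_monomials s * rel_poly p) i j.
Proof.
rewrite big_map /poly_of_monomials -sumrN big_distrl pgen_sum; apply: eq_bigr => m _.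
by rewrite relation_pgen scale_vpow_pgen subrK scaleNr.
Qed.

Lemma in_Zp_int p (x : rat) : prime p -> x \is a Num.int -> in_Zp p x.
Proof.
move=> p_prime; rewrite /in_Zp Qint_def => /eqP ->; rewrite dvdz1 /=.
by apply/negP => /eqP p1; move: p_prime; rewrite p1.
Qed.

Lemma rel_witness_in_kuZp p a b s : prime p ->
    (forall m, m \in s -> m.1 \is a Num.int) ->
  forall x, x \in rel_witness a b s -> in_kuZp p x.1.
Proof.
move=> p_prime s_int _ /mapP[m /s_int m_int ->] n; apply: in_Zp_int => //.
rewrite coefZ rpredM ?rpredN // /vpow; case: ifP => _; first by rewrite coef0 rpred0.
by rewrite coefXn natr_int.
Qed.

Lemma u1_int p : prime p -> u1 p \is a Num.int.
Proof.
move=> p_prime; have p_gt1 := prime_gt1 p_prime.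
have binom_p : 'C(p ^ 2, p) = (p * 'C((p ^ 2).-1, p - 1))%N.
  apply/eqP; rewrite -(@eqn_pmul2l p) ?(ltn_trans _ p_gt1) //.
  rewrite mulnA (_ : (p * p = p ^ 2)%N); last by rewrite expnS expn1.
  by rewrite mul_bin_diag (_ : ((p - 1).+1 = p)%N) //; lia.
by rewrite /u1 binom_p natrM mulrC mulKf ?natr_int // pnatr_eq0; lia.
Qed.

(* The monomials (coefficient, exponent of v) of rho_k: the coefficients of
   (A+B) in Sigma_1, Sigma_2 and Sigma_3. *)
Definition AB_monomials (p k : nat) : seq (rat * int) :=
  [seq (c_ p t * (p%:R : rat) ^+ (k - t - 1), t%:Z * g1 p) | t <- iota 0 k] ++
  [seq (c'_ t * (p%:R : rat) ^+ (k - 2 * t - 1), t%:Z * g2 p) | t <- iota 1 (k.-1)./2] ++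
  flatten [seq [seq (c_rt p r t * (p%:R : rat) ^+ (k - 2 * r - t - 1),
                     r%:Z * g2 p + t%:Z * g1 p) | t <- iota 1 (k - 1 - 2 * r)]
          | r <- iota 1 (k - 2)./2].

Lemma AB_monomials_int p k : prime p ->
  forall m, m \in AB_monomials p k -> m.1 \is a Num.int.
Proof.
move=> p_prime m; have u_int := u1_int p_prime.
rewrite !mem_cat => /or3P[/mapP[t _ ->] | /mapP[t _ ->] |
  /flattenP[_ /mapP[r _ ->] /mapP[t _ ->]]] /=; rewrite /c_ /c'_ /c_rt.
- by rewrite !rpredM ?rpredX ?rpredN ?natr_int.
- by rewrite !rpredM ?rpredX ?rpredN ?natr_int ?intr_int.
- by rewrite !rpredM ?rpredX ?rpredN ?natr_int ?intr_int.
Qed.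

Section Instance.
Variables (p k : nat) (a b : int) (i j : int).
Hypothesis p_gt0 : (0 < p)%N.

Local Notation P := (p%:R : rat).
Local Notation PP := P%:P.
Local Notation UU := (u1 p)%:P.
Local Notation XX := (vpow (g1 p)).
Local Notation YY := (vpow (g2 p)).

Let g1_ge0 : 0 <= g1 p. Proof. by rewrite /g1; lia. Qed.
Let g2_ge0 : 0 <= g2 p. Proof. by rewrite /g2; lia. Qed.

Lemma poly_of_AB_monomials : poly_of_monomials (AB_monomials p k) = rho PP UU XX YY k.
Proof.
rewrite /poly_of_monomials !big_cat !big_map big_flatten big_map /rho.
rewrite -sigma2_add_sigma3; congr (_ + (_ + _)).
- apply: eq_bigr => t _ /=; rewrite /sigma1_term /c_ vpowMn //.
  by rewrite -mul_polyC 2!rmorphM /= !rmorphXn /= rmorphN1.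
- apply: eq_bigr => t _ /=; rewrite /sigma2_term /c'_ vpowMn //.
  by rewrite -mul_polyC 2!rmorphM /= !rmorphXn /= rmorphN1 rmorph_int.
- apply: eq_bigr => r _; rewrite big_map; apply: eq_bigr => t _ /=.
  rewrite /sigma3_term /c_rt vpowD ?mulr_ge0 // !vpowMn //.
  by rewrite -mul_polyC 3!rmorphM /= !rmorphXn /= rmorphN1 rmorph_int.
Qed.

Lemma AB_parts_monomials :
  esum (iota 0 k) (fun t =>
      scl ((c_ p t * P ^+ (k - t - 1)) *: vpow (t%:Z * g1 p))
          (ABelt p a (b - t%:Z * g1 p))) i j
  + (esum (iota 1 (k.-1)./2) (fun t =>
      scl ((c'_ t * P ^+ (k - 2 * t - 1)) *: vpow (t%:Z * g2 p))
          (ABelt p a (b - t%:Z * g2 p))) i j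
  + esum (iota 1 (k - 2)./2) (fun r =>
      esum (iota 1 (k - 1 - 2 * r)) (fun t =>
        scl ((c_rt p r t * P ^+ (k - 2 * r - t - 1)) *: vpow (r%:Z * g2 p + t%:Z * g1 p))
            (ABelt p a (b - r%:Z * g2 p - t%:Z * g1 p)))) i j)
  = \sum_(m <- AB_monomials p k) scl (m.1 *: vpow m.2) (ABelt p a (b - m.2)) i j.
Proof.
rewrite /esum !big_cat !big_map big_flatten big_map; congr (_ + (_ + _)).
apply: eq_bigr => r _; rewrite big_map; apply: eq_bigr => t _.
by rewrite /= opprD addrA.
Qed.

Lemma remainder_term_pgen t : (2 * t <= k)%N ->
  eadd
    (scl (((ck k.+1 t)%:~R * (-1) ^+ (k + t) * u1 p ^+ (k - 2 * t) * P)
            *: vpow ((k%:Z - 2 * t%:Z) * g1 p + t%:Z * g2 p))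
         (gen a (b - (k%:Z - 2 * t%:Z) * g1 p - t%:Z * g2 p)))
    (scl (((dk k.+1 t)%:~R * (-1) ^+ (k + t) * u1 p ^ (k%:Z - 2 * t%:Z - 1))
            *: (vpow ((k%:Z - 2 * t%:Z - 1) * g1 p) * vpow ((t%:Z + 1) * g2 p)))
         (gen a (b - (k%:Z - 2 * t%:Z - 1) * g1 p - (t%:Z + 1) * g2 p))) i j
  = pgen a b (remainder_term PP UU XX YY k t) i j.
Proof.
move=> le_2t_k; rewrite /eadd /remainder_term pgenD.
have def_k2t : k%:Z - 2 * t%:Z = (k - 2 * t)%N%:Z by lia.
congr (_ + _).
  rewrite (scl_gen_pgen _ _ (b := b)); last by ring.
  rewrite def_k2t vpowD ?mulr_ge0 // !vpowMn //.
  by rewrite -mul_polyC 3!rmorphM /= !rmorphXn /= rmorphN1 rmorph_int.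
rewrite (scl_gen_pgen2 _ _ _ (b := b)); last by ring.
case: (leqP (2 * t).+1 k) => [lt_2t_k | ge_2t_k]; last first.
  by rewrite dk_eq0 1?mulr0z ?mul0r ?scale0r //; lia.
rewrite (_ : k%:Z - 2 * t%:Z - 1 = (k - 2 * t - 1)%N%:Z); last lia.
rewrite (_ : t%:Z + 1 = t.+1%:Z); last lia.
rewrite -exprnP !vpowMn //.
by rewrite -mul_polyC 2!rmorphM /= !rmorphXn /= rmorphN1 rmorph_int.
Qed.

Lemma remainder_pgen : (1 <= k)%N ->
  scl (((-1) ^+ k * u1 p ^+ k * P) *: vpow (k%:Z * g1 p)) (gen a (b - k%:Z * g1 p)) i j
  + (scl (((-1) ^+ k * u1 p ^+ k.-1) *: vpow ((k%:Z - 1) * g1 p + g2 p))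
         (gen a (b - (k%:Z - 1) * g1 p - g2 p)) i j
  + esum (iota 1 k./2) (fun t =>
      let tz : int := t%:Z in
      eadd
        (scl (((ck k.+1 t)%:~R * (-1) ^+ (k + t) * u1 p ^+ (k - 2 * t) * P)
                *: vpow ((k%:Z - 2 * tz) * g1 p + tz * g2 p))
             (gen a (b - (k%:Z - 2 * tz) * g1 p - tz * g2 p)))
        (scl (((dk k.+1 t)%:~R * (-1) ^+ (k + t) * u1 p ^ (k%:Z - 2 * tz - 1))
                *: (vpow ((k%:Z - 2 * tz - 1) * g1 p) * vpow ((tz + 1) * g2 p)))
             (gen a (b - (k%:Z - 2 * tz - 1) * g1 p - (tz + 1) * g2 p)))) i j)
  = pgen a b (remainder PP UU XX YY k) i j.
Proof.
move=> k_gt0; rewrite /remainder !pgenD; congr (_ + (_ + _)).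
- rewrite (scl_gen_pgen _ _ (b := b)) ?subrK // vpowMn //.
  by rewrite -mul_polyC 2!rmorphM /= !rmorphXn /= rmorphN1.
- rewrite (scl_gen_pgen _ _ (b := b)); last by ring.
  rewrite (_ : k%:Z - 1 = k.-1%:Z); last lia.
  rewrite vpowD ?mulr_ge0 // vpowMn //.
  by rewrite -mul_polyC rmorphM /= !rmorphXn /= rmorphN1.
- rewrite /esum pgen_sum; apply: eq_big_iota => t ht.
  by apply: remainder_term_pgen; lia.
Qed.

End Instance.

Theorem theorem4p2 (p : nat) (hp : prime p) (a b : int) (k : nat) (hk : (2 <= k)%N) :
  let P : rat := p%:R in
  let G1 := g1 p in
  let G2 := g2 p in
  let u := u1 p in
  let kz : int := k%:Z in
  let LHS : elt := scl ((P ^+ k.+1) %:P) (gen a b) in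
  let T1 : elt := scl (((-1) ^+ k * u ^+ k * P) *: vpow (kz * G1))
                      (gen a (b - kz * G1)) in
  let T2 : elt := scl (((-1) ^+ k * u ^+ k.-1) *: vpow ((kz - 1) * G1 + G2))
                      (gen a (b - (kz - 1) * G1 - G2)) in
  let S0 : elt := esum (iota 1 k./2) (fun t =>
      let tz : int := t%:Z in
      eadd
        (scl (((ck k.+1 t)%:~R * (-1) ^+ (k + t) * u ^+ (k - 2 * t) * P)
                *: vpow ((kz - 2 * tz) * G1 + tz * G2))
             (gen a (b - (kz - 2 * tz) * G1 - tz * G2)))
        (scl (((dk k.+1 t)%:~R * (-1) ^+ (k + t) * u ^ (kz - 2 * tz - 1))
                *: (vpow ((kz - 2 * tz - 1) * G1) * vpow ((tz + 1) * G2)))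
             (gen a (b - (kz - 2 * tz - 1) * G1 - (tz + 1) * G2)))) in
  let S1 : elt := esum (iota 0 k) (fun t =>
      scl ((c_ p t * P ^+ (k - t - 1)) *: vpow (t%:Z * G1))
          (ABelt p a (b - t%:Z * G1))) in
  let S2 : elt := esum (iota 1 (k.-1)./2) (fun t =>
      scl ((c'_ t * P ^+ (k - 2 * t - 1)) *: vpow (t%:Z * G2))
          (ABelt p a (b - t%:Z * G2))) in
  let S3 : elt := esum (iota 1 (k - 2)./2) (fun r =>
      esum (iota 1 (k - 1 - 2 * r)) (fun t =>
        scl ((c_rt p r t * P ^+ (k - 2 * r - t - 1))
               *: vpow (r%:Z * G2 + t%:Z * G1))
            (ABelt p a (b - r%:Z * G2 - t%:Z * G1)))) in
  let RHS : elt := eadd T1 (eadd T2 (eadd S0 (eadd S1 (eadd S2 S3)))) in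
  (* equality in F (x)_{ku_*} ku_*(Z_{p^2}): the difference lies in the
     Z_(p)[v]-span of the relations *)
  exists s : seq ({poly rat} * (int * int)),
    (forall x, x \in s -> in_kuZp p x.1) /\
    forall i j : int,
      LHS i j = RHS i j + \sum_(x <- s) x.1 * relation p x.2.1 x.2.2 i j.
Proof.
move=> P G1 G2 u kz LHS T1 T2 S0 S1 S2 S3 RHS.
subst RHS S3 S2 S1 S0 T2 T1 LHS kz u G2 G1 P.
have p_gt0 : (0 < p)%N by rewrite prime_gt0.
exists (rel_witness a b (AB_monomials p k)); split.
  exact: rel_witness_in_kuZp (AB_monomials_int hp).
move=> i j; rewrite /eadd scl_polyC_gen_pgen rel_witness_pgen.
rewrite (_ : forall x y z w : {poly rat}, x + (y + (z + w)) = x + (y + z) + w);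
  last by move=> x y z w; rewrite !addrA.
rewrite remainder_pgen ?(ltnW hk) // AB_parts_monomials sum_scl_ABelt_pgen -!pgenD.
congr (pgen a b _ i j).
rewrite poly_of_AB_monomials // rel_poly_split ?prime_gt1 // rmorphXn mulNr.
exact: expr_decomposition.
Qed.
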